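(* Let $(G,L,v)$ be a reachable triple and $D$ a nonnegative integer. Then for every color $i\in[4]$ such that $i\in L(u)$ for some neighbor $u$ of $v$ in $G$: (1) if $\deg_G(v)=2$, then $P(G,L,v,i,D)\le\frac{12}{25}$; (2) if $\deg_G(v)=1$, then $P(G,L,v,i,D)\le\frac{6}{13}$.
   Context: Colors are $[4]=\{1,2,3,4\}$. A list-coloring instance $(G,L)$ is a finite simple graph $G=(V,E)$ with $L:V\to 2^{[4]}$. For a vertex $v$, $G_v$ is $G$ with $v$ and its incident edges removed, and $G_{v,w}=(G_v)_w$. If $v$ has neighbors $v_1,\dots,v_d$ (in a fixed order), then for $k\in[d]$ and a color $j$, $L_{k,j}$ is the list assignment on $G_v$ with $L_{k,j}(v_\ell)=L(v_\ell)\setminus\{j\}$ for $\ell<k$ and $L_{k,j}(u)=L(u)$ for all other vertices $u$ (so $L_{1,j}=L$). A triple $(G,L,v)$ with $v\in V$ is reachable if $\deg_G(u)\le3$ and $|L(u)|\ge\deg_G(u)+1$ for every $u\in V$, and moreover $\deg_G(v)\le2$ and $|L(v)|\ge\deg_G(v)+2$. The procedure $P(G,L,v,i,D)$ ($i\in[4]$, $D$ an integer) is defined recursively (empty products equal $1$): (a) If $i\notin L(v)$, return $0$. Otherwise, if $D\le 0$ or $\deg_G(v)=0$, return $1/|L(v)|$. (b) If $\deg_G(v)=1$ with neighbor $v_1$: let $x=P(G_v,L,v_1,i,D-1)$. If $|L(v)|=2$, say $L(v)=\{i,j\}$, let $y=P(G_v,L,v_1,j,D-1)$ and return $\frac{1-x}{2-x-y}$.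 If $|L(v)|=4$, return $\frac{1-x}{3}$. If $|L(v)|=3$, let $j$ be the unique color in $[4]\setminus L(v)$, $y=P(G_v,L,v_1,j,D-1)$, and return $\frac{1-x}{2+y}$. (c) If $\deg_G(v)=2$: order its neighbors $v_1,v_2$ so that $\deg_G(v_1)\ge\deg_G(v_2)$ and, if $\deg_G(v_1)=\deg_G(v_2)=1$, so that $i\notin L(v_1)$ implies $i\notin L(v_2)$. Let $u_1,\dots,u_{d_1}$ be the neighbors of $v_1$ in $G_v$ (fixed order) and for $k\in[d_1]$, $w\in[4]$ let $L'_{k,w}$ be the list assignment on $G_{v,v_1}$ with $L'_{k,w}(u_\ell)=L(u_\ell)\setminus\{w\}$ for $\ell<k$ and $L'_{k,w}(u)=L(u)$ otherwise. Set $x_{k,w}=P(G_{v,v_1},L'_{k,w},u_k,w,D-1)$ for $k\in[d_1]$, $w\in L(v_1)$. For $j\in L(v)$ set $f_j=0$ if $j\notin L(v_1)$ and otherwise $f_j=\frac{\prod_{k=1}^{d_1}(1-x_{k,j})}{\sum_{w\in L(v_1)}\prod_{k=1}^{d_1}(1-x_{k,w})}$, and set $y_j=P(G_v,L_{2,j},v_2,j,D-1)$. Return $\frac{(1-f_i)(1-y_i)}{\sum_{j\in L(v)}(1-f_j)(1-y_j)}$. (d) If $\deg_G(v)=3$ with neighbors $v_1,v_2,v_3$: for $j\in L(v)$ let $x_j=P(G_v,L_{1,j},v_1,j,D-1)$, $y_j=P(G_v,L_{2,j},v_2,j,D-1)$, $z_j=P(G_v,L_{3,j},v_3,j,D-1)$,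 and return $\frac{(1-x_i)(1-y_i)(1-z_i)}{\sum_{j\in L(v)}(1-x_j)(1-y_j)(1-z_j)}$. For reachable triples, all recursive calls are again on reachable triples and case (d) never occurs. *)

From HB Require Import structures.
From mathcomp Require Import all_boot all_order all_algebra.
Set Implicit Arguments. Unset Strict Implicit. Unset Printing Implicit Defensive.
Import Order.TTheory GRing.Theory Num.Theory.
Local Open Scope ring_scope.

(* Colors [4] = {1,2,3,4} are represented by 'I_4 = {0,1,2,3} (color c <-> c+1). *)
Definition color := 'I_4.

(* A finite graph: a finite list of vertices (natural numbers) and an
   adjacency relation; only edges between listed vertices count. *)
Record graph := Graph { gV : seq nat; gE : rel nat }.

Definition simple_graph (G : graph) : Prop :=
  uniq (gV G) /\ symmetric (gE G) /\ irreflexive (gE G).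

Definition nbrs (G : graph) (v : nat) : seq nat := [seq u <- gV G | gE G v u].
Definition deg (G : graph) (v : nat) : nat := size (nbrs G v).

Definition delv (G : graph) (v : nat) : graph :=
  Graph [seq u <- gV G | u != v] (gE G).

Definition lists := nat -> {set color}.

(* remove color j from the lists of the first k vertices of s (0-based count);
   so L_{k,j} (1-based k, as in the paper) is  restr L s (k-1) j. *)
Definition restr (L : lists) (s : seq nat) (k : nat) (j : color) : lists :=
  fun u => if u \in take k s then L u :\ j else L u.

(* A "fixed order" of neighbours: an oracle listing the neighbours of v in G. *)
Definition order_oracle := graph -> nat -> seq nat.
Definition valid_oracle (ord : order_oracle) : Prop :=
  forall G v, perm_eq (ord G v) (nbrs G v).

Definition reachable (G : graph) (L : lists) (v : nat) : Prop :=
  simple_graph G /\ v \in gV G /\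
  (forall u, u \in gV G -> (deg G u <= 3)%N /\ (deg G u + 1 <= #|L u|)%N) /\
  (deg G v <= 2)%N /\ (deg G v + 2 <= #|L v|)%N.

Fixpoint P (ord : order_oracle) (D : nat) (G : graph) (L : lists) (v : nat)
  (i : color) {struct D} : rat :=
  if i \notin L v then 0 else
  match D with
  | 0%N => (#|L v|%:R)^-1
  | D'.+1 =>
    let s := ord G v in
    let Gv := delv G v in
    match deg G v with
    | 0%N => (#|L v|%:R)^-1
    | 1%N =>
      let v1 := nth 0%N s 0 in
      let x := P ord D' Gv L v1 i in
      if #|L v| == 2%N then
        let j := odflt i [pick j in L v :\ i] in
        let y := P ord D' Gv L v1 j in
        (1 - x) / (2 - x - y)
      else if #|L v| == 4%N then (1 - x) / 3
      else if #|L v| == 3%N then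
        let j := odflt i [pick j in ~: L v] in
        let y := P ord D' Gv L v1 j in
        (1 - x) / (2 + y)
      else (#|L v|%:R)^-1 (* does not occur for reachable triples *)
    | 2%N =>
      let a := nth 0%N s 0 in
      let b := nth 0%N s 1 in
      let ok := (deg G b <= deg G a)%N &&
                (((deg G a == 1%N) && (deg G b == 1%N)) ==>
                 ((i \notin L a) ==> (i \notin L b))) in
      let v1 := if ok then a else b in
      let v2 := if ok then b else a in
      let Gvv1 := delv Gv v1 in
      let us := ord Gv v1 in
      let d1 := deg Gv v1 in
      (* x k w = x_{k+1,w} of the paper (k 0-based) *)
      let x (k : nat) (w : color) :=
        P ord D' Gvv1 (restr L us k w) (nth 0%N us k) w in
      let pr (w : color) := \prod_(k < d1) (1 - x k w) in
      let f (j : color) :=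
        if j \in L v1 then pr j / \sum_(w in L v1) pr w else 0 in
      let y (j : color) := P ord D' Gv (restr L [:: v1; v2] 1 j) v2 j in
      (1 - f i) * (1 - y i) / \sum_(j in L v) (1 - f j) * (1 - y j)
    | 3%N =>
      let x (j : color) := P ord D' Gv (restr L s 0 j) (nth 0%N s 0) j in
      let y (j : color) := P ord D' Gv (restr L s 1 j) (nth 0%N s 1) j in
      let z (j : color) := P ord D' Gv (restr L s 2 j) (nth 0%N s 2) j in
      (1 - x i) * (1 - y i) * (1 - z i) /
        \sum_(j in L v) (1 - x j) * (1 - y j) * (1 - z j)
    | _ => 0 (* degree > 3: not covered by the procedure *)
    end
  end.

(* By induction on D, every value of P on a reachable triple lies in [0, 1/2],
   and in [1/13, 1/2] when i is in L(v).
   If deg v = 1 the value is (1-x)/3 or (1-x)/(2+y) with x, y in [0, 1/2], and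
   x >= 1/13 when i is in the list of the neighbour, giving at most 6/13.
   If deg v = 2 then L(v) = [4], and the weights f_j of v1 form a probability
   vector whose unnormalised entries are products of at most d1 <= 2 factors in
   [1/2, 1] over at least d1 + 2 colours; hence f_i <= 4/7, and f_i >= 1/13 when
   i is in L(v1).  The value is N/(N+R) with N = (1-f_i)(1-y_i) and R the sum
   over the three other colours, so y <= 1/2 gives (1-f_i)/2 <= N <= 1-f_i and
   (2+f_i)/2 <= R <= 2+f_i.  Then f_i <= 4/7 is exactly what keeps N/(N+R)
   above 1/13, while 13 N <= 12 R, i.e. the bound 12/25, holds as soon as
   f_i >= 1/19 or y_i >= 1/13; the latter holds when i is in L(v2). *)

From HB Require Import structures.
From mathcomp Require Import all_boot all_order all_algebra zify lra.
Set Implicit Arguments. Unset Strict Implicit.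
Import Order.TTheory GRing.Theory Num.Theory.
Local Open Scope ring_scope.

Implicit Types (ord : order_oracle) (G : graph) (L : lists) (i : color).

Definition valid_instance (G : graph) (L : lists) : Prop :=
  simple_graph G /\
  forall u, u \in gV G -> (deg G u <= 3)%N /\ (deg G u + 1 <= #|L u|)%N.

Lemma reachable_valid G L v : reachable G L v -> valid_instance G L.
Proof. by case=> ? [_ [? _]]. Qed.

Lemma card_color (A : {set color}) : (#|A| <= 4)%N.
Proof. by have := max_card A; rewrite card_ord. Qed.

Lemma reachable_card G L v : reachable G L v -> (deg G v + 2 <= #|L v| <= 4)%N.
Proof. by case=> _ [_ [_ [_ HL]]]; rewrite HL card_color. Qed.

Lemma nbrs_delv G a u : nbrs (delv G a) u = [seq w <- nbrs G u | w != a].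
Proof.
by rewrite /nbrs /= -!filter_predI; apply: eq_filter => w /=; rewrite andbC.
Qed.

Lemma deg_delv G a u :
  uniq (gV G) -> (deg (delv G a) u + (a \in nbrs G u) = deg G u)%N.
Proof.
move=> U; rewrite /deg nbrs_delv size_filter.
rewrite -(count_uniq_mem a (filter_uniq _ U)) -(count_predC (pred1 a)) addnC.
by congr (_ + _)%N; apply: eq_count.
Qed.

Lemma mem_nbrsC G a u : symmetric (gE G) -> a \in gV G -> u \in gV G ->
  (u \in nbrs G a) = (a \in nbrs G u).
Proof. by move=> S Ha Hu; rewrite !mem_filter Ha Hu S. Qed.

Lemma simple_graph_delv G a : simple_graph G -> simple_graph (delv G a).
Proof. by case=> U SI; split=> //; apply: filter_uniq. Qed.

(* Removing [a] lowers the degree of each neighbour [u] of [a] by one, which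
   pays for the colour [u] may lose; the new root [w] keeps its whole list
   and so gains the slack required of a root. *)
Lemma reachable_delv G L L' a w :
  valid_instance G L -> a \in gV G -> w \in nbrs G a -> L' w = L w ->
  (forall u, #|L u| <= #|L' u| + (u \in nbrs G a))%N ->
  reachable (delv G a) L' w.
Proof.
case=> [[U [S I]] H] Ha Haw HLw HL'.
have deg_del u :
    u \in gV G -> (deg (delv G a) u + (u \in nbrs G a) = deg G u)%N.
  by move=> Hu; rewrite (mem_nbrsC S Ha Hu); exact: deg_delv.
have Hw : w \in gV G by move: Haw; rewrite mem_filter => /andP[].
have wa : w != a by apply: contraTneq Haw => ->; rewrite mem_filter I.
split; first exact: simple_graph_delv.
split; first by rewrite mem_filter wa.
split.
  move=> u; rewrite mem_filter => /andP[_ Hu].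
  have := deg_del u Hu; have := H u Hu; have := HL' u.
  by case: (u \in nbrs G a) => /=; lia.
have := deg_del w Hw; have := H w Hw; rewrite Haw HLw; lia.
Qed.

Lemma card_restr L (s A : seq nat) k (j : color) u :
  {subset take k s <= A} -> (#|L u| <= #|restr L s k j u| + (u \in A))%N.
Proof.
move=> sA; rewrite /restr; case: ifP => [/sA -> | _]; last exact: leq_addr.
by rewrite (cardsD1 j (L u)) addnC leq_add2l leq_b1.
Qed.

Lemma restr_nth L (s : seq nat) k (j : color) : uniq s -> (k < size s)%N ->
  restr L s k j (nth 0%N s k) = L (nth 0%N s k).
Proof.
by move=> U lt_k; rewrite /restr in_take ?mem_nth // index_uniq // ltnn.
Qed.

Lemma size_oracle ord G v : valid_oracle ord -> size (ord G v) = deg G v.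
Proof. by move=> ord_valid; rewrite (perm_size (ord_valid G v)). Qed.

Section Marginal.
Variables (T : finType) (R : realFieldType).
Implicit Types (A : {set T}) (pr : T -> R) (j : T).

Definition marginal A pr (j : T) : R :=
  if j \in A then pr j / \sum_(w in A) pr w else 0.

Lemma marginal_ge0 A pr j : (forall w, 0 <= pr w) -> 0 <= marginal A pr j.
Proof.
move=> pr_ge0; rewrite /marginal; case: ifP => // _.
by rewrite divr_ge0 ?sumr_ge0.
Qed.

Lemma sum_marginal A pr : 0 < \sum_(w in A) pr w -> \sum_j marginal A pr j = 1.
Proof.
move=> S_gt0; rewrite -big_mkcond /= -mulr_suml divff //.
exact: lt0r_neq0.
Qed.

Lemma marginal_bounds A pr (c : R) j : 0 < c -> (forall w, c <= pr w <= 1) ->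
  j \in A ->
  c / (c + #|A|.-1%:R) <= marginal A pr j <= 1 / (1 + c * #|A|.-1%:R).
Proof.
move=> c_gt0 pr_bnd jA; rewrite /marginal jA (big_setD1 j jA) /=.
set rest := \sum_(w in A :\ j) pr w.
have /andP[pj_lb pj_ub] := pr_bnd j.
have m_ge0 : 0 <= #|A|.-1%:R :> R := ler0n _ _.
have /andP[rest_lb rest_ub] : c * #|A|.-1%:R <= rest <= #|A|.-1%:R.
  have -> : #|A|.-1 = #|A :\ j| by rewrite (cardsD1 j A) jA.
  rewrite mulr_natr -!sumr_const; apply/andP; split; apply: ler_sum => w _;
    by case/andP: (pr_bnd w).
have cm_ge0 : 0 <= c * #|A|.-1%:R := mulr_ge0 (ltW c_gt0) m_ge0.
have S_gt0 : 0 < pr j + rest by nra.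
apply/andP; split.
  by rewrite ler_pdivlMr // mulrAC ler_pdivrMr //; nra.
by rewrite ler_pdivrMr // mulrAC ler_pdivlMr //; nra.
Qed.

End Marginal.

Section Bounds.
Variable R : realFieldType.

Definition avoidance_ratio (A : {set color}) (f y : color -> R) (i : color) :=
  (1 - f i) * (1 - y i) / \sum_(j in A) (1 - f j) * (1 - y j).

Lemma prod_complement_bounds d (x : 'I_d -> R) :
  (forall k, 0 <= x k <= 1/2) -> (1/2) ^+ d <= \prod_k (1 - x k) <= 1.
Proof.
move=> x_bnd; apply/andP; split.
  rewrite -[d in _ ^+ d]card_ord -prodr_const; apply: ler_prod => k _.
  by have := x_bnd k; lra.
by apply: prodr_ile1 => k _; have := x_bnd k; lra.
Qed.

Definition bounded (p : R) (lower : bool) : Prop :=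
  0 <= p <= 1/2 /\ (lower -> 1/13 <= p).

Lemma boundedT p : 1/13 <= p <= 1/2 -> bounded p true.
Proof. by case/andP=> lb ub; split=> [|//]; apply/andP; split=> //; lra. Qed.

Lemma bounded0 : bounded 0 false.
Proof. by split=> //; lra. Qed.

Lemma bounded_inv_card (n : nat) :
  (2 <= n <= 4)%N -> bounded (n%:R^-1 : R) true.
Proof.
by case: n => [|[|[|[|[|n]]]]] // _; apply: boundedT; apply/andP; split; lra.
Qed.

Lemma inv_card_le (n : nat) : (3 <= n)%N ->
  n%:R^-1 <= 6/13 :> R /\ n%:R^-1 <= 12/25 :> R.
Proof.
move=> n_ge3; have : n%:R^-1 <= 1/3 :> R.
  by rewrite div1r lef_pV2 ?posrE ?ltr0n ?ler_nat //; lia.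
by split; lra.
Qed.

Lemma deg1_card4_bounds (x : R) : 0 <= x <= 1/2 ->
  bounded ((1 - x) / 3) true /\ (1 - x) / 3 <= 6/13.
Proof.
by case/andP=> x_ge0 x_le; split; [apply: boundedT; apply/andP; split|]; lra.
Qed.

Lemma deg1_card3_bounds (x y : R) : 0 <= x <= 1/2 -> 0 <= y <= 1/2 ->
  bounded ((1 - x) / (2 + y)) true /\ (1/13 <= x -> (1 - x) / (2 + y) <= 6/13).
Proof.
case/andP=> x_ge0 x_le /andP[y_ge0 y_le]; have den_gt0 : 0 < 2 + y by lra.
split; last by move=> x_lb; rewrite ler_pdivrMr //; lra.
apply: boundedT; rewrite ler_pdivlMr // ler_pdivrMr //.
by apply/andP; split; lra.
Qed.

Lemma half_pow_bounds (d m : nat) : (d <= 2)%N -> (d < m)%N ->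
  1/4 <= (1/2) ^+ d :> R /\ 3/4 <= (1/2) ^+ d * m%:R :> R.
Proof.
move=> d_le2; rewrite -(ler_nat R) => m_lb.
case: d d_le2 m_lb => [|[|[|]]] // _ m_lb.
all: by rewrite ?expr0 ?expr1 ?expr2; split; nra.
Qed.

Lemma marginal_prod_bounds (A : {set color}) d (x : 'I_d -> color -> R) i :
  (d <= 2)%N -> (d + 2 <= #|A|)%N -> (forall k w, 0 <= x k w <= 1/2) ->
  let f := marginal A (fun w => \prod_k (1 - x k w)) in
  [/\ forall j, 0 <= f j, \sum_j f j = 1, f i <= 4/7
    & (i \in A -> 1/13 <= f i)].
Proof.
move=> d_le2 dA x_bnd f.
set c : R := (1/2) ^+ d.
have pr_bnd w : c <= \prod_k (1 - x k w) <= 1.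
  by apply: prod_complement_bounds => k; apply: x_bnd.
have c_gt0 : 0 < c by rewrite exprn_gt0 //; lra.
have [c_lb cm_lb] : 1/4 <= c /\ 3/4 <= c * #|A|.-1%:R.
  by apply: half_pow_bounds => //; lia.
have m_ub : #|A|.-1%:R <= 3 :> R by rewrite ler_nat; have := card_color A; lia.
have f_ge0 j : 0 <= f j.
  by apply: marginal_ge0 => w; have /andP[] := pr_bnd w; lra.
have f_bnd j : j \in A -> 1/13 <= f j <= 4/7.
  move=> jA; have /andP[lb ub] := marginal_bounds c_gt0 pr_bnd jA.
  have den_gt0 : 0 < c + #|A|.-1%:R by have := ler0n R #|A|.-1; lra.
  have den'_gt0 : 0 < 1 + c * #|A|.-1%:R by lra.
  apply/andP; split.
    by apply: le_trans lb; rewrite ler_pdivlMr //; lra.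
  by apply: le_trans ub _; rewrite ler_pdivrMr //; lra.
split=> //; last by move=> /f_bnd /andP[].
- have [a aA] : exists a, a \in A.
    by apply/set0Pn; rewrite -card_gt0; lia.
  apply: sum_marginal; rewrite (big_setD1 a aA) /=.
  have := pr_bnd a; have : 0 <= \sum_(w in A :\ a) \prod_k (1 - x k w).
    by apply: sumr_ge0 => w _; have /andP[] := pr_bnd w; lra.
  lra.
- have [/f_bnd /andP[] // | iA] := boolP (i \in A).
  by rewrite /f /marginal (negbTE iA); lra.
Qed.

Lemma sum_compl_others (f : color -> R) i : \sum_j f j = 1 ->
  \sum_(j in [set: color] :\ i) (1 - f j) = 2 + f i.
Proof.
move=> f_sum; have f_others : \sum_(j in [set: color] :\ i) f j = 1 - f i.
  suff : f i + \sum_(j in [set: color] :\ i) f j = 1 by lra.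
  rewrite -f_sum [RHS](bigD1 i) //=; congr (_ + _).
  by apply: eq_bigl => j; rewrite !inE andbT.
have card_others : #|[set: color] :\ i| = 3%N.
  by rewrite cardsDS ?sub1set ?in_setT // cardsT card_ord cards1.
by rewrite sumrB f_others sumr_const card_others; lra.
Qed.

Lemma avoidance_ratio_bounds (f y : color -> R) i :
  (forall j, 0 <= f j) -> \sum_j f j = 1 -> f i <= 4/7 ->
  (forall j, 0 <= y j <= 1/2) ->
  let p := avoidance_ratio setT f y i in
  bounded p true /\ (1/13 <= f i \/ 1/13 <= y i -> p <= 12/25).
Proof.
move=> f_ge0 f_sum fi_ub y_bnd p.
have f_le1 j : f j <= 1 by rewrite -f_sum (bigD1 j) //= lerDl sumr_ge0.
have term_bnd j : (1 - f j) / 2 <= (1 - f j) * (1 - y j) <= 1 - f j.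
  have /andP[y_ge0 y_le] := y_bnd j.
  have a_ge0 : 0 <= 1 - f j by rewrite subr_ge0.
  apply/andP; split; first by apply: ler_wpM2l => //; lra.
  by rewrite -[X in _ <= X]mulr1; apply: ler_wpM2l => //; lra.
have others := sum_compl_others i f_sum.
set num := (1 - f i) * (1 - y i).
set rest := \sum_(j in [set: color] :\ i) (1 - f j) * (1 - y j).
have /andP[num_lb num_ub] : (1 - f i) / 2 <= num <= 1 - f i := term_bnd i.
have rest_lb : (2 + f i) / 2 <= rest.
  by rewrite -others mulr_suml; apply: ler_sum => j _; case/andP: (term_bnd j).
have rest_ub : rest <= 2 + f i.
  by rewrite -others; apply: ler_sum => j _; case/andP: (term_bnd j).
have den_gt0 : 0 < num + rest by have := f_le1 i; have := f_ge0 i; lra.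
have -> : p = num / (num + rest).
  by rewrite /p /avoidance_ratio (big_setD1 i) ?in_setT.
have fi_ge0 := f_ge0 i.
split; first apply: boundedT.
  by rewrite ler_pdivlMr // ler_pdivrMr //; apply/andP; split; lra.
case=> [fi_lb | yi_lb]; rewrite ler_pdivrMr //; first lra.
have : num <= (1 - f i) * (12/13) by rewrite /num ler_wpM2l ?subr_ge0 //; lra.
lra.
Qed.

End Bounds.

Lemma P_notin ord D G L v i : i \notin L v -> P ord D G L v i = 0.
Proof. by case: D => [|D] /= ->. Qed.

Lemma P0 ord G L v i : i \in L v -> P ord 0 G L v i = #|L v|%:R^-1.
Proof. by move=> Hi; rewrite /= Hi. Qed.

Lemma P_deg0 ord D G L v i : i \in L v -> deg G v = 0%N ->
  P ord D.+1 G L v i = #|L v|%:R^-1.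
Proof. by move=> Hi Hd; rewrite /= Hi Hd. Qed.

Lemma P_deg1_card4 ord D G L v v1 i :
  i \in L v -> deg G v = 1%N -> ord G v = [:: v1] -> #|L v| = 4%N ->
  P ord D.+1 G L v i = (1 - P ord D (delv G v) L v1 i) / 3.
Proof. by move=> Hi Hd Eo HL; rewrite /= Hi Hd Eo HL. Qed.

Lemma P_deg1_card3 ord D G L v v1 i :
  i \in L v -> deg G v = 1%N -> ord G v = [:: v1] -> #|L v| = 3%N -> exists j,
  P ord D.+1 G L v i =
    (1 - P ord D (delv G v) L v1 i) / (2 + P ord D (delv G v) L v1 j).
Proof. by move=> Hi Hd Eo HL; rewrite /= Hi Hd Eo HL; eexists. Qed.

(* Which neighbour plays the role of v1 does not matter for the bounds below. *)
Lemma P_deg2 ord D G L v a b i :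
  i \in L v -> deg G v = 2%N -> ord G v = [:: a; b] -> exists v1 v2,
  perm_eq [:: v1; v2] [:: a; b] /\
  P ord D.+1 G L v i =
    avoidance_ratio (L v)
      (marginal (L v1) (fun w => \prod_(k < deg (delv G v) v1)
         (1 - P ord D (delv (delv G v) v1) (restr L (ord (delv G v) v1) k w)
                (nth 0%N (ord (delv G v) v1) k) w)))
      (fun j => P ord D (delv G v) (restr L [:: v1; v2] 1 j) v2 j) i.
Proof.
move=> Hi Hd Eo; rewrite /= Hi Hd Eo /=.
set ok := (_ && _); case: ok; [exists a, b | exists b, a]; split => //.
exact: (permEl (perm_rot 1 [:: a; b])).
Qed.

Section Step.
Variables (ord : order_oracle) (D : nat).
Hypothesis ord_valid : valid_oracle ord.
Hypothesis IH :
  forall G L v j, reachable G L v -> bounded (P ord D G L v j) (j \in L v).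

Lemma P_deg1_step G L v i : reachable G L v -> deg G v = 1%N -> i \in L v ->
  bounded (P ord D.+1 G L v i) true /\
  ((exists2 u, u \in nbrs G v & i \in L u) -> P ord D.+1 G L v i <= 6/13).
Proof.
move=> Hr Hd Hi.
have [v1 Eo] : exists v1, ord G v = [:: v1].
  move: (size_oracle G v ord_valid); rewrite Hd.
  by case: (ord G v) => [|v1 []] // _; exists v1.
have mem_nbrs u : (u \in nbrs G v) = (u == v1).
  by rewrite -(perm_mem (ord_valid G v)) Eo inE.
have Hv : v \in gV G by case: Hr => _ [].
have Hr1 : reachable (delv G v) L v1.
  apply: reachable_delv (reachable_valid Hr) Hv _ erefl (fun u => leq_addr _ _).
  by rewrite mem_nbrs.
have x_bnd j := IH j Hr1.
have x_lb : (exists2 u, u \in nbrs G v & i \in L u) ->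
    1/13 <= P ord D (delv G v) L v1 i.
  by case=> u; rewrite mem_nbrs => /eqP -> /(x_bnd i).2.
have := reachable_card Hr; rewrite Hd => /andP[card_lb card_ub].
have [HL|HL] : #|L v| = 3%N \/ #|L v| = 4%N by lia.
  have [j ->] := P_deg1_card3 D Hi Hd Eo HL.
  have [p_bnd p_sharp] := deg1_card3_bounds (x_bnd i).1 (x_bnd j).1.
  by split; [exact: p_bnd | move=> /x_lb /p_sharp].
rewrite (P_deg1_card4 D Hi Hd Eo HL).
by have [p_bnd p_le] := deg1_card4_bounds (x_bnd i).1.
Qed.

Lemma P_deg2_step G L v i : reachable G L v -> deg G v = 2%N -> i \in L v ->
  bounded (P ord D.+1 G L v i) true /\
  ((exists2 u, u \in nbrs G v & i \in L u) -> P ord D.+1 G L v i <= 12/25).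
Proof.
move=> Hr Hd Hi.
have valid := reachable_valid Hr.
have Hv : v \in gV G by case: Hr => _ [].
have [a [b Eo]] : exists a b, ord G v = [:: a; b].
  move: (size_oracle G v ord_valid); rewrite Hd.
  by case: (ord G v) => [|a [|b []]] // _; exists a, b.
have [v1 [v2 [perm12 ->]]] := P_deg2 D Hi Hd Eo.
have nbrs12 : perm_eq [:: v1; v2] (nbrs G v).
  by apply: perm_trans perm12 _; rewrite -Eo.
have uniq12 : uniq [:: v1; v2].
  by rewrite (perm_uniq nbrs12) filter_uniq //; case: valid => [[]].
have [Hv1 Hv2] : v1 \in nbrs G v /\ v2 \in nbrs G v.
  by rewrite -!(perm_mem nbrs12) !inE !eqxx orbT.
have Lv_full : L v = [set: color].
  apply/eqP; rewrite eqEcard subsetT cardsT card_ord.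
  by have := reachable_card Hr; rewrite Hd => /andP[].
set G1 := delv G v.
have Hr1 : reachable G1 L v1 :=
  reachable_delv valid Hv Hv1 erefl (fun u => leq_addr _ _).
have [_ [v1G1 [_ [d_le2 dA]]]] := Hr1.
set us := ord G1 v1.
have us_perm : perm_eq us (nbrs G1 v1) := ord_valid G1 v1.
have x_bnd (k : 'I_(deg G1 v1)) w :
    0 <= P ord D (delv G1 v1) (restr L us k w) (nth 0%N us k) w <= 1/2.
  have lt_k : (k < size us)%N by rewrite (perm_size us_perm).
  apply: (IH w _).1; apply: reachable_delv (reachable_valid Hr1) v1G1 _ _ _.
  - by rewrite -(perm_mem us_perm) mem_nth.
  - rewrite restr_nth // (perm_uniq us_perm) filter_uniq //.
    by case: (reachable_valid Hr1) => [[]].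
  - by move=> u; apply: card_restr => z /mem_take; rewrite (perm_mem us_perm).
have y_bnd j : bounded (P ord D G1 (restr L [:: v1; v2] 1 j) v2 j) (j \in L v2).
  have HLv2 : restr L [:: v1; v2] 1 j v2 = L v2 :=
    restr_nth (k := 1) L j uniq12 isT.
  rewrite -HLv2; apply: IH; apply: reachable_delv valid Hv Hv2 HLv2 _.
  by move=> u; apply: card_restr => z; rewrite inE => /eqP ->.
have [f_ge0 f_sum fi_ub fi_lb] := marginal_prod_bounds i d_le2 dA x_bnd.
have [p_bnd p_sharp] :=
  avoidance_ratio_bounds f_ge0 f_sum fi_ub (fun j => (y_bnd j).1).
rewrite Lv_full; split; first exact: p_bnd.
case=> u; rewrite -(perm_mem nbrs12) !inE.
case/orP=> /eqP -> Hu; apply: p_sharp; first by left; apply: fi_lb.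
by right; apply: (y_bnd i).2.
Qed.

End Step.

Lemma P_bounded ord D : valid_oracle ord ->
  forall G L v i, reachable G L v -> bounded (P ord D G L v i) (i \in L v).
Proof.
move=> ord_valid; elim: D => [|D IH] G L v i Hr.
all: have [Hi|Hi] := boolP (i \in L v);
  last by rewrite (P_notin ord _ G Hi); apply: bounded0.
all: have /andP[card_lb card_ub] := reachable_card Hr.
  by rewrite (P0 ord G Hi); apply: bounded_inv_card; rewrite card_ub andbT; lia.
case Hd: (deg G v) card_lb => [|[|[|d]]] card_lb.
- rewrite (P_deg0 ord D Hi Hd).
  by apply: bounded_inv_card; rewrite card_ub andbT; lia.
- exact: (P_deg1_step ord_valid IH Hr Hd Hi).1.
- exact: (P_deg2_step ord_valid IH Hr Hd Hi).1.
- by case: Hr => _ [_ [_ []]]; rewrite Hd.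
Qed.

Unset Implicit Arguments.

Theorem proposition9 (ord : order_oracle) (G : graph) (L : lists) (v : nat)
  (D : nat) :
  valid_oracle ord -> reachable G L v ->
  forall i : color, (exists2 u, u \in nbrs G v & i \in L u) ->
    (deg G v = 2%N -> P ord D G L v i <= 12%:R / 25%:R) /\
    (deg G v = 1%N -> P ord D G L v i <= 6%:R / 13%:R).
Proof.
move=> ord_valid Hr i Hnb.
have [Hi|Hi] := boolP (i \in L v); last first.
  rewrite (P_notin ord D G Hi).
  by split=> _; apply: divr_ge0; apply: ler0n.
have /andP[card_lb _] := reachable_card Hr.
case: D => [|D].
  rewrite (P0 ord G Hi); split=> Hd; rewrite Hd in card_lb;
    have /(@inv_card_le rat)[le_6_13 le_12_25] : (3 <= #|L v|)%N by lia.
  - exact: le_12_25.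
  - exact: le_6_13.
have IH := P_bounded D ord_valid.
split=> Hd; [exact: (P_deg2_step ord_valid IH Hr Hd Hi).2 Hnb
            | exact: (P_deg1_step ord_valid IH Hr Hd Hi).2 Hnb].
Qed.
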